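(* Let $G=(V,E,H)$ be a HEDG such that every strongly connected component $S$ of $G$ lies completely in one district of the induced sub-HEDG $\mathrm{Anc}^G(S)$. Then every pseudo-topological order for $G$ is a perfect elimination order for $G$ (and thus a quasi-topological order).
   Context: HEDG $G=(V,E,H)$: $V$ finite, $E\subseteq V\times V$ (self-loops allowed), $H$ a simplicial complex on $V$ (contains singletons, closed under subsets); $v\leftrightarrow w$ for distinct $v,w$ with $\{v,w\}\in H$. $\mathrm{Pa}^G$, $\mathrm{Anc}^G$, $\mathrm{Desc}^G$ (including the node); $\mathrm{Sc}^G(v)=\mathrm{Anc}^G(v)\cap\mathrm{Desc}^G(v)$ is the strongly connected component of $v$. Induced sub-HEDG on $A$: $(A,E\cap A^2,\{F\in H:F\subseteq A\})$; $A$ ancestral if $\mathrm{Anc}(A)=A$. District of $v$ in a HEDG: $v$ together with all nodes connected to $v$ by a bidirected path $v\leftrightarrow\cdots\leftrightarrow w$. Marginalization $G^{\mathrm{marg}\setminus U}=(V\setminus U,E',H')$: $v_1\to v_2\in E'$ iff a directed path $v_1\to u_1\to\cdots\to u_r\to v_2$ ($r\ge0$, $u_i\in U$) exists; $F'\in H'$ iff there is $F\in H$, $F\subseteq F'\cup U$, with each $v\in F'$ in $F\setminus U$ or reached by a directed path $u_1\to\cdots\to u_r\to v$ ($r\ge1$, $u_i\in U$, $u_1\in F$). Moralization: $v-w$ ($v\ne w$) iff there are $v_1,\dots,v_n$ with $v\in\{v_1\}\cup\mathrm{Pa}(v_1)$, $w\in\{v_n\}\cup\mathrm{Pa}(v_n)$,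 $v_1\leftrightarrow\cdots\leftrightarrow v_n$. $\partial_U(v)$: neighbours in undirected graph $U$. For a total order $<$ on $V$: $\mathrm{Pred}^G_\le(v)=G^{\mathrm{marg}\setminus\{w:w>v\}}$. $<$ is pseudo-topological if $w<v$ for all $v$ and all $w\in\mathrm{Anc}^G(v)\setminus\mathrm{Sc}^G(v)$; a perfect elimination order if for all $v$ and every ancestral sub-HEDG $A$ of $\mathrm{Pred}^G_\le(v)$ with $v\in A$, $\partial_{A^{\mathrm{moral}}}(v)\cup\{v\}$ is complete in $A^{\mathrm{moral}}$; quasi-topological if both. *)

(* HEDGs over an ambient finite type V; a HEDG carries its
   own node set (so that sub-HEDGs and marginalizations are again HEDGs). *)
From mathcomp Require Import all_boot.
Set Implicit Arguments. Unset Strict Implicit. Unset Printing Implicit Defensive.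

Section HEDG.
Variable V : finType.

Record hedg := Hedg { hV : {set V}; hE : rel V; hH : pred {set V} }.

Definition simplicial_on (S : {set V}) (h : pred {set V}) : Prop :=
  [/\ forall F, h F -> F \subset S,
      forall v, v \in S -> h [set v]
    & forall F F' : {set V}, h F -> F' \subset F -> h F'].

Definition edge (G : hedg) : rel V :=
  fun x y => [&& x \in hV G, y \in hV G & hE G x y].

Definition pa (G : hedg) (v : V) : {set V} := [set w | edge G w v].
Definition anc (G : hedg) (v : V) : {set V} := [set w in hV G | connect (edge G) w v].
Definition desc (G : hedg) (v : V) : {set V} := [set w in hV G | connect (edge G) v w].
Definition ancS (G : hedg) (A : {set V}) : {set V} := \bigcup_(v in A) anc G v.
Definition sc (G : hedg) (v : V) : {set V} := anc G v :&: desc G v.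

Definition bidir (G : hedg) : rel V :=
  fun v w => [&& v != w, v \in hV G, w \in hV G & hH G [set v; w]].
Definition district (G : hedg) (v : V) : {set V} :=
  [set w in hV G | connect (bidir G) v w].

Definition induced (G : hedg) (A : {set V}) : hedg :=
  Hedg (A :&: hV G) (hE G) [pred F | hH G F && (F \subset A :&: hV G)].

Definition ancestral (G : hedg) (A : {set V}) : bool := ancS G A == A.

Definition relIn (U : {set V}) (r : rel V) : rel V :=
  fun x y => [&& x \in U, y \in U & r x y].

Definition dpathU (G : hedg) (U : {set V}) (x y : V) : bool :=
  [exists u1 in U, exists ur in U,
     [&& edge G x u1, connect (relIn U (edge G)) u1 ur & edge G ur y]].

Definition marg (G : hedg) (U : {set V}) : hedg :=
  Hedg (hV G :\: U)
       (fun x y => edge G x y || dpathU G U x y)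
       [pred F' : {set V} | (F' \subset hV G :\: U) &&
          [exists F, [&& hH G F, F \subset F' :|: U &
             [forall v in F', (v \in F :\: U) ||
                [exists u1 in F :&: U, exists ur in U,
                   connect (relIn U (edge G)) u1 ur && edge G ur v]]]]].

Definition moral (G : hedg) : rel V :=
  fun v w => (v != w) &&
    [exists v1 in hV G, exists vn in hV G,
       [&& v \in v1 |: pa G v1, w \in vn |: pa G vn & connect (bidir G) v1 vn]].

Definition nbr (G : hedg) (v : V) : {set V} := [set w | moral G v w].

Definition complete_moral (G : hedg) (C : {set V}) : Prop :=
  {in C &, forall x y, x != y -> moral G x y}.

Definition strict_total (lt : rel V) : Prop :=
  [/\ irreflexive lt, transitive lt & forall x y, x != y -> lt x y || lt y x].

Definition pred_le (G : hedg) (lt : rel V) (v : V) : hedg :=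
  marg G [set w | lt v w].

Definition pseudo_topological (G : hedg) (lt : rel V) : Prop :=
  forall v w, v \in hV G -> w \in anc G v :\: sc G v -> lt w v.

Definition perfect_elimination_order (G : hedg) (lt : rel V) : Prop :=
  forall v, v \in hV G -> forall A : {set V},
    A \subset hV (pred_le G lt v) -> ancestral (pred_le G lt v) A -> v \in A ->
    complete_moral (induced (pred_le G lt v) A)
                   (v |: nbr (induced (pred_le G lt v) A) v).

Definition quasi_topological (G : hedg) (lt : rel V) : Prop :=
  pseudo_topological G lt /\ perfect_elimination_order G lt.

End HEDG.

From mathcomp Require Import all_boot.
Set Implicit Arguments. Unset Strict Implicit. Unset Printing Implicit Defensive.

(* Fix v, let U be the nodes after v and A an ancestral set of G^{marg\U}
   containing v. Every node of v ∪ ∂(v) is a parent of (or equal to) a node in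
   the bidirected component of v in A, so any two of them are moralised through
   that component. This reduces to showing that a child v1 of v in A is
   bidirected-connected to v in A. Now v1 is a descendant of v that is not
   after v, so pseudo-topologicality puts it in Sc(v); by hypothesis v and v1
   are joined by a bidirected path through ancestors of v. Replacing each node
   of that path by the first node outside U on a directed path towards v, which
   lies in A because A is ancestral, yields a bidirected path in A. *)

Section HedgFacts.
Variables (V : finType) (G : hedg V).

Lemma bidir_sym : symmetric (bidir G).
Proof.
move=> x y; rewrite /bidir eq_sym setUC.
by case: (x \in hV G); case: (y \in hV G); rewrite ?andbF ?andbT.
Qed.

Lemma connect_bidir_sym : connect_sym (bidir G).
Proof. exact: sym_connect_sym bidir_sym. Qed.

Lemma connect_bidir_district w x y :
  x \in district G w -> y \in district G w -> connect (bidir G) x y.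
Proof.
rewrite !inE => /andP[_ wx] /andP[_ wy].
by apply: connect_trans wy; rewrite connect_bidir_sym.
Qed.

Lemma edge_induced (A : {set V}) x y : edge (induced G A) x y -> edge G x y.
Proof. by rewrite /edge /= !inE => /and3P[/andP[_ ->] /andP[_ ->] ->]. Qed.

Lemma connect_edge_in x y : connect (edge G) x y -> y \in hV G -> x \in hV G.
Proof.
case/connectP=> [[|z p] /=]; first by move=> _ ->.
by case/andP=> /and3P[].
Qed.

Lemma mem_ancestral (A : {set V}) x y :
  ancestral G A -> y \in A -> x \in hV G -> connect (edge G) x y -> x \in A.
Proof.
move=> /eqP AE yA xG xy; rewrite -AE; apply/bigcupP; exists y => //.
by rewrite inE xG.
Qed.

Lemma ancS_sc_connect v x : x \in ancS G (sc G v) -> connect (edge G) x v.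
Proof.
case/bigcupP=> s; rewrite !inE => /andP[/andP[_ sv] _] /andP[_ xs].
exact: connect_trans xs sv.
Qed.

Lemma mem_sc_desc (lt : rel V) v w :
  pseudo_topological G lt -> v \in hV G -> w \in hV G ->
  connect (edge G) v w -> ~~ lt v w -> w \in sc G v.
Proof.
move=> pt vG wG vw; apply: contraNT => wNsc; apply: (pt _ _ wG).
by move: wNsc; rewrite !inE vG wG vw /= andbT => ->.
Qed.

Lemma complete_moral_district v (C : {set V}) :
  (forall w, w \in C ->
     exists vn, [/\ vn \in hV G, w \in vn |: pa G vn & connect (bidir G) v vn]) ->
  complete_moral G C.
Proof.
move=> HC x y xC yC xy.
have [vx [vxG xvx vvx]] := HC x xC; have [vy [vyG yvy vvy]] := HC y yC.
rewrite /moral xy; apply/existsP; exists vx; rewrite vxG.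
apply/existsP; exists vy; rewrite vyG xvx yvy /=.
by apply: connect_trans vvy; rewrite connect_bidir_sym.
Qed.

End HedgFacts.

Section Marginalization.
Variables (V : finType) (G : hedg V) (U : {set V}).

Definition exits_through (u z : V) : bool :=
  [exists ur in U, connect (relIn U (edge G)) u ur && edge G ur z].

(* [z'] stands for [z] in G^{marg\U}: [z] itself if [z] is kept, otherwise
   the first node outside [U] on some directed path from [z] (not unique). *)
Definition marg_rep (z z' : V) : Prop := z' \notin U /\ (z' = z \/ exits_through z z').

Lemma exits_through_mem u z : exits_through u z -> u \in U.
Proof.
case/existsP=> ur /and3P[urU + _]; case/connectP=> [[|y p] /=]; first by move=> _ <-.
by case/andP=> /and3P[].
Qed.

Lemma marg_rep_id z z' : z \notin U -> marg_rep z z' -> z' = z.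
Proof. by move=> zU [_ [//|/exits_through_mem]]; rewrite (negbTE zU). Qed.

Lemma marg_rep_in z z' : z \in hV G -> marg_rep z z' -> z' \in hV G.
Proof. by move=> zG [_ [->//|/existsP[ur /and3P[_ _ /and3P[]]]]]. Qed.

Lemma edge_marg_rep z y y' :
  z \notin U -> edge G z y -> marg_rep y y' -> edge (marg G U) z y'.
Proof.
move=> zU zy yy'; have yG : y \in hV G by case/and3P: zy.
have zG : z \in hV G by case/and3P: zy.
rewrite /edge /= !inE zU zG (marg_rep_in yG yy').
case: yy' => y'U [y'E|yy']; rewrite y'U /=; first by rewrite y'E zy.
apply/orP; right; apply/existsP; exists y; rewrite (exits_through_mem yy').
case/existsP: yy' => ur /and3P[urU yur ury'].
by apply/existsP; exists ur; rewrite urU zy yur ury'.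
Qed.

Lemma exits_through_edge z y y' :
  z \in U -> edge G z y -> marg_rep y y' -> exits_through z y'.
Proof.
move=> zU zy [_ [->|yy']].
  by apply/existsP; exists z; rewrite zU connect0.
have yU := exits_through_mem yy'.
case/existsP: yy' => ur /and3P[urU yur ury']; apply/existsP; exists ur.
by rewrite urU ury' andbT (connect_trans _ yur) // connect1 //= /relIn zU yU.
Qed.

Lemma connect_marg x y : connect (edge (marg G U)) x y -> connect (edge G) x y.
Proof.
apply: connect_sub => a b /and3P[_ _ /orP[/connect1 //|]].
case/existsP=> u1 /andP[_ /existsP[ur /andP[_ /and3P[au1 u1ur urb]]]].
apply: connect_trans (connect1 au1) (connect_trans _ (connect1 urb)).
by apply: connect_sub u1ur => c d /and3P[_ _ /connect1].
Qed.

Lemma marg_rep_connect z b :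
  connect (edge G) z b -> b \notin U ->
  exists2 z', marg_rep z z' & connect (edge (marg G U)) z' b.
Proof.
case/connectP=> p + ->; elim: p z => [|y p IH] z /=.
  by move=> _ zU; exists z => //; split; last left.
case/andP=> zy yp bU; have [y' yy' y'b] := IH y yp bU.
have [zU|zU] := boolP (z \in U).
  by exists y' => //; split; [case: yy' | right; apply: exits_through_edge yy'].
exists z; first by split; last left.
exact: connect_trans (connect1 (edge_marg_rep zU zy yy')) y'b.
Qed.

Lemma marg_rep_face (F : {set V}) z z' :
  marg_rep z z' -> z \in F ->
  (z' \in F :\: U) || [exists u1 in F :&: U, exits_through u1 z'].
Proof.
case=> z'U [z'E|zz'] zF; first by rewrite z'E in z'U *; rewrite inE z'U zF.
by apply/orP; right; apply/existsP; exists z; rewrite inE zF (exits_through_mem zz').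
Qed.

Lemma marg_rep_mem z z' : marg_rep z z' -> z \in z' |: U.
Proof. by case=> _ [->|/exits_through_mem zU]; rewrite !inE ?eqxx ?zU ?orbT. Qed.

Lemma bidir_marg_rep (A : {set V}) a b a' b' :
  A \subset hV (marg G U) -> hH G [set a; b] ->
  marg_rep a a' -> marg_rep b b' -> a' \in A -> b' \in A ->
  connect (bidir (induced (marg G U) A)) a' b'.
Proof.
move=> Asub abH aa' bb' a'A b'A.
have [->|a'b'] := eqVneq a' b'; first exact: connect0.
have a'b'A : [set a'; b'] \subset A :&: (hV G :\: U).
  by apply/subsetP=> x /set2P[]->; rewrite inE ?a'A ?b'A (subsetP Asub).
have a'GA := subsetP a'b'A a' (set21 _ _); have b'GA := subsetP a'b'A b' (set22 _ _).
apply: connect1; rewrite /bidir /= a'b' a'GA b'GA a'b'A (subset_trans a'b'A (subsetIr _ _)).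
rewrite andbT /=; apply/existsP; exists [set a; b].
rewrite abH /=; apply/andP; split.
  apply/subsetP=> x /set2P[]->; [move: (marg_rep_mem aa') | move: (marg_rep_mem bb')];
  by rewrite !inE => /orP[->|->]; rewrite ?orbT.
apply/forallP=> x; apply/implyP=> /set2P[]->.
  exact: marg_rep_face aa' (set21 _ _).
exact: marg_rep_face bb' (set22 _ _).
Qed.

Lemma connect_bidir_marg (A S : {set V}) a b a' :
  A \subset hV (marg G U) ->
  {in S, forall y, exists2 y', marg_rep y y' & y' \in A} ->
  connect (bidir (induced G S)) a b -> marg_rep a a' -> a' \in A ->
  exists2 b', marg_rep b b' & connect (bidir (induced (marg G U) A)) a' b'.
Proof.
move=> Asub Srep /connectP[p + ->] {b}; elim: p a a' => [|y p IH] a a' /=.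
  by move=> _ aa' _; exists a'.
case/andP=> /and4P[_ _ /setIP[yS _] /andP[ayH _]] yp aa' a'A.
have [y' yy' y'A] := Srep y yS; have [b' bb' y'b'] := IH y y' yp yy' y'A.
by exists b' => //; apply: connect_trans y'b'; apply: bidir_marg_rep ayH aa' yy' a'A y'A.
Qed.

End Marginalization.

Definition sc_in_one_district (V : finType) (G : hedg V) : Prop :=
  forall v, exists w, sc G v \subset district (induced G (ancS G (sc G v))) w.

Section PerfectElimination.
Variables (V : finType) (G : hedg V) (lt : rel V).
Hypotheses (lt_irr : irreflexive lt) (pt : pseudo_topological G lt)
           (scD : sc_in_one_district G).

Section Neighbourhood.
Variables (v : V) (A : {set V}).
Hypotheses (vG : v \in hV G) (Asub : A \subset hV (pred_le G lt v))
           (Aanc : ancestral (pred_le G lt v) A) (vA : v \in A).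

Let U := [set w | lt v w].
Let GA := induced (marg G U) A.

Let vU : v \notin U. Proof. by rewrite inE lt_irr. Qed.

Lemma marg_rep_anc z : connect (edge G) z v -> exists2 z', marg_rep G U z z' & z' \in A.
Proof.
move=> zv; have [z' zz' z'v] := marg_rep_connect zv vU; exists z' => //.
exact: mem_ancestral Aanc vA (connect_edge_in z'v (subsetP Asub v vA)) z'v.
Qed.

Lemma connect_bidir_child v1 :
  v \in v1 |: pa GA v1 -> v1 \in hV GA -> connect (bidir GA) v v1.
Proof.
case/setU1P=> [-> _|]; first exact: connect0.
rewrite inE => /edge_induced vv1 /setIP[_ /setDP[v1G v1U]].
have vv1G := connect_marg (connect1 vv1).
have v1sc : v1 \in sc G v by apply: mem_sc_desc pt vG v1G vv1G _; rewrite inE in v1U.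
have vsc : v \in sc G v by rewrite !inE vG connect0.
have [w /subsetP scw] := scD v.
have [v1' v1v1' vv1'] := connect_bidir_marg Asub (S := ancS G (sc G v))
  (fun y yS => marg_rep_anc (ancS_sc_connect yS))
  (connect_bidir_district (scw v vsc) (scw v1 v1sc)) (conj vU (or_introl erefl)) vA.
by rewrite -(marg_rep_id v1U v1v1').
Qed.

Lemma nbr_district w : w \in v |: nbr GA v ->
  exists vn, [/\ vn \in hV GA, w \in vn |: pa GA vn & connect (bidir GA) v vn].
Proof.
case/setU1P=> [->|].
  by exists v; rewrite setU11 connect0 /= in_setI vA in_setD vU vG.
rewrite inE => /andP[_ /existsP[v1 /andP[v1GA /existsP[vn /andP[vnGA]]]]].
case/and3P=> vv1 wvn v1vn; exists vn; split=> //.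
exact: connect_trans (connect_bidir_child vv1 v1GA) v1vn.
Qed.

Lemma complete_moral_nbr : complete_moral GA (v |: nbr GA v).
Proof. exact: complete_moral_district nbr_district. Qed.

End Neighbourhood.

Lemma pseudo_topological_perfect_elimination : perfect_elimination_order G lt.
Proof. move=> v vG A; exact: complete_moral_nbr. Qed.

End PerfectElimination.

Theorem mainTheorem11 (V : finType) (G : hedg V) :
  hV G = [set: V] ->
  simplicial_on (hV G) (hH G) ->
  (forall v : V, exists w : V,
      sc G v \subset district (induced G (ancS G (sc G v))) w) ->
  forall lt : rel V, strict_total lt ->
  pseudo_topological G lt ->
  perfect_elimination_order G lt /\ quasi_topological G lt.
Proof.
move=> _ _ scD lt [lt_irr _ _] pt.
have peo := pseudo_topological_perfect_elimination lt_irr pt scD.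
by split; last split.
Qed.
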